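(* Let $n\in\mathbb{N}$, $\hbar\in{]0,\infty[}$, $\mu\in\mathbb{R}$ and $f\in\bigoplus_k\mathscr{P}^{k,k}(\mathbb{C}^{1+n})$. Then $\Omega_{\hbar,\mu}(f)\mathbb{1}-f_{\mathrm{av}}\in\langle\mathcal{J}-\mu\rangle$.
   Context: $\mathscr{P}^{k,k}(\mathbb{C}^{1+n})$ is the span of $z^K\overline{z}^L$, $|K|=|L|=k$. Wick product: $f\star_\hbar g=\sum_K\frac{\hbar^{|K|}}{K!}\frac{\partial^{|K|}f}{\partial\overline{z}^K}\frac{\partial^{|K|}g}{\partial z^K}$; $\langle\mathcal{J}-\mu\rangle$ is the $^*$-ideal of $(\bigoplus_k\mathscr{P}^{k,k}(\mathbb{C}^{1+n}),\star_\hbar)$ (involution: complex conjugation) generated by $\mathcal{J}-\mu\mathbb{1}$, where $\mathcal{J}=\sum_jz_j\overline{z_j}$. $\tau_k$ is the linear functional on $\mathscr{P}^{k,k}$ with $\tau_k(z^K\overline{z}^L)=\delta_{K,L}\frac{K!\,n!}{(k+n)!}$. For $f=\sum_kf_k$ with $f_k\in\mathscr{P}^{k,k}$: $f_{\mathrm{av}}=\sum_k\mathcal{J}^k\tau_k(f_k)$ (pointwise powers) and $\Omega_{\hbar,\mu}(f)=\sum_k\hbar^k(\mu/\hbar)_{\downarrow,k}\tau_k(f_k)$, where $(x)_{\downarrow,k}=\prod_{j=0}^{k-1}(x-j)$. *)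

From HB Require Import structures.
From mathcomp Require Import all_boot all_order all_algebra.
From mathcomp Require Import mpoly.
Set Implicit Arguments. Unset Strict Implicit. Unset Printing Implicit Defensive.
Import Order.TTheory GRing.Theory Num.Theory.
Local Open Scope ring_scope.

(* Polynomials on C^{1+n} in z and zbar are encoded as polynomials in
   (1+n)+(1+n) commuting indeterminates: index [lshift _ j] is z_j and
   index [rshift _ j] is zbar_j. *)
Section Wick.
Variables (C : numClosedFieldType) (n : nat).
Local Notation N := n.+1.
Local Notation M := (N + N)%N.
Local Notation P := {mpoly C[M]}.

Definition zpart (m : 'X_{1..M}) : 'X_{1..N} := [multinom m (lshift N i) | i < N].
Definition zbpart (m : 'X_{1..M}) : 'X_{1..N} := [multinom m (rshift N i) | i < N].

Definition liftz (K : 'X_{1..N}) : 'X_{1..M} :=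
  [multinom (match split i with inl j => K j | inr _ => 0%N end) | i < M].
Definition liftzb (K : 'X_{1..N}) : 'X_{1..M} :=
  [multinom (match split i with inl _ => 0%N | inr j => K j end) | i < M].

Definition mfact (K : 'X_{1..N}) : nat := (\prod_(i < N) (K i)`!)%N.

(* Wick product f *_hb g = sum_K hb^|K|/K! d^K f/dzbar^K d^K g/dz^K ;
   the terms with |K| >= msize f vanish, so the sum is over |K| < msize f + 1. *)
Definition wick (hb : C) (f g : P) : P :=
  \sum_(K : 'X_{1..N < (msize f).+1})
     ((hb ^+ mdeg K) / (mfact K)%:R) *: (f^`M[liftzb K] * g^`M[liftz K]).

Definition Jpol : P := \sum_(j < N) 'X_(lshift N j) * 'X_(rshift N j).

(* f lies in (+)_k P^{k,k}: every monomial z^K zbar^L of f has |K| = |L| *)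
Definition balanced (p : P) : bool :=
  all (fun m => mdeg (zpart m) == mdeg (zbpart m)) (msupp p).

(* complex conjugation: conj (c z^K zbar^L) = conj(c) z^L zbar^K *)
Definition swapi (i : 'I_M) : 'I_M :=
  match split i with inl j => rshift N j | inr j => lshift N j end.
Definition swapm (m : 'X_{1..M}) : 'X_{1..M} := [multinom m (swapi i) | i < M].
Definition mconj (p : P) : P := \sum_(m <- msupp p) (p@_m)^* *: 'X_[swapm m].

Definition is_star_ideal (hb : C) (I : P -> Prop) : Prop :=
  (forall x, I x -> balanced x) /\
  I 0 /\
  (forall x y, I x -> I y -> I (x + y)) /\
  (forall (c : C) x, I x -> I (c *: x)) /\
  (forall a x, balanced a -> I x -> I (wick hb a x)) /\
  (forall a x, balanced a -> I x -> I (wick hb x a)) /\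
  (forall x, I x -> I (mconj x)).

Definition star_ideal_gen (hb : C) (g : P) (p : P) : Prop :=
  forall I : P -> Prop, is_star_ideal hb I -> I g -> I p.

(* tau_k (f_k), where f_k is the (k,k)-component of f *)
Definition tau (k : nat) (f : P) : C :=
  \sum_(m <- msupp f | (zpart m == zbpart m) && (mdeg (zpart m) == k))
     f@_m * ((mfact (zpart m))%:R * (n`!)%:R / ((k + n)`!)%:R).

Definition ffall (x : C) (k : nat) : C := \prod_(j < k) (x - j%:R).

(* f_av = sum_k J^k tau_k(f_k)   (f_k = 0 for k >= msize f) *)
Definition f_av (f : P) : P := \sum_(k < msize f) Jpol ^+ k * (tau k f)%:MP.

Definition Omega (hb mu : C) (f : P) : C :=
  \sum_(k < msize f) hb ^+ k * ffall (mu / hb) k * tau k f.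

End Wick.

(* Wick multiplication by J on the left is J *_hb p = J p + hb E p, where
   E = sum_j z_j d/dz_j is the Euler operator in z; as E J^k = k J^k, we get
   J *_hb (J^k - c) = J^(k+1) + hb k J^k - c J.  For c_k = hb^k (mu/hb)_(down,k)
   one has c_(k+1) = c_k (mu - k hb), so induction on k puts J^k - c_k in every
   *-ideal containing J - mu.  Finally Omega(f) 1 - f_av is the linear
   combination - sum_k tau_k(f_k) (J^k - c_k). *)

From HB Require Import structures.
From mathcomp Require Import all_boot all_order all_algebra.
From mathcomp Require Import mpoly ring.
Set Implicit Arguments. Unset Strict Implicit. Unset Printing Implicit Defensive.
Import Order.TTheory GRing.Theory Num.Theory.
Local Open Scope ring_scope.

Lemma ffall_scaled_recr (F : numClosedFieldType) (hb mu : F) (k : nat) : hb != 0 ->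
  hb ^+ k.+1 * ffall (mu / hb) k.+1 = hb ^+ k * ffall (mu / hb) k * (mu - hb * k%:R).
Proof. by move=> hb0; rewrite /ffall big_ord_recr /= exprSr; field. Qed.

Section Wick.
Variables (C : numClosedFieldType) (n : nat).
Local Notation N := n.+1.
Local Notation M := (N + N)%N.
Local Notation P := {mpoly C[M]}.
Local Notation J := (Jpol C n).

Lemma split_rshift (j : 'I_N) : split (rshift N j) = inr j :> 'I_N + 'I_N.
Proof. exact: (unsplitK (inr j)). Qed.

Lemma liftz0 : liftz (0%MM : 'X_{1..N}) = 0%MM.
Proof. by apply/mnmP => i; rewrite mnmE mnm0E; case: split_ordP => j _; rewrite ?mnm0E. Qed.

Lemma liftzb0 : liftzb (0%MM : 'X_{1..N}) = 0%MM.
Proof. by apply/mnmP => i; rewrite mnmE mnm0E; case: split_ordP => j _; rewrite ?mnm0E. Qed.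

Lemma liftzU (j : 'I_N) : liftz U_(j)%MM = U_(lshift N j)%MM.
Proof.
apply/mnmP => i; rewrite mnmE mnm1E.
by case: split_ordP => k ->; rewrite ?mnm1E ?eq_lshift ?eq_lrshift.
Qed.

Lemma liftzbU (j : 'I_N) : liftzb U_(j)%MM = U_(rshift N j)%MM.
Proof.
apply/mnmP => i; rewrite mnmE mnm1E.
by case: split_ordP => k ->; rewrite ?mnm1E ?eq_rshift ?eq_rlshift.
Qed.

Lemma liftzb_rshift (K : 'X_{1..N}) (j : 'I_N) : liftzb K (rshift N j) = K j.
Proof. by rewrite mnmE split_rshift. Qed.

Lemma mfact0 : mfact (0%MM : 'X_{1..N}) = 1%N.
Proof. by rewrite /mfact big1 // => i _; rewrite mnm0E. Qed.

Lemma mfactU (j : 'I_N) : mfact U_(j)%MM = 1%N.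
Proof. by rewrite /mfact big1 // => i _; rewrite mnm1E; case: eqP. Qed.

Definition mzzb (j : 'I_N) : 'X_{1..M} := (U_(lshift N j) + U_(rshift N j))%MM.

Lemma mzzb_lshift (j i : 'I_N) : mzzb j (lshift N i) = (j == i).
Proof. by rewrite mnmDE !mnm1E eq_rlshift eq_lshift addn0. Qed.

Lemma mzzb_rshift (j i : 'I_N) : mzzb j (rshift N i) = (j == i).
Proof. by rewrite mnmDE !mnm1E eq_lrshift eq_rshift. Qed.

Lemma mzzb_inj : injective mzzb.
Proof. by move=> j k /mnmP /(_ (lshift N j)); rewrite !mzzb_lshift eqxx; case: eqP. Qed.

Lemma JpolE : J = \sum_(j < N) 'X_[mzzb j].
Proof. by apply: eq_bigr => j _; rewrite mpolyXD. Qed.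

Lemma balanced_Jpol : balanced J.
Proof.
rewrite /balanced JpolE; apply/allP => m /msupp_sum_le /flattenP [s /mapP [j _ ->]].
rewrite msuppX inE => /eqP -> /=.
suff -> : zpart (mzzb j) = zbpart (mzzb j) by [].
by apply/mnmP => i; rewrite !mnmE !eq_shift addn0.
Qed.

Lemma mcoeff_Jpol (j : 'I_N) : J@_(mzzb j) = 1.
Proof.
rewrite JpolE raddf_sum (bigD1 j) //= mcoeffX eqxx big1 ?addr0 // => k /negbTE kj.
by rewrite mcoeffX (inj_eq mzzb_inj) kj.
Qed.

Lemma msize_Jpol_gt2 : (2 < msize J)%N.
Proof.
have -> : 2%N = mdeg (mzzb ord0) by rewrite mdegD !mdeg1.
by apply: msize_mdeg_lt; rewrite mcoeff_msupp mcoeff_Jpol oner_neq0.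
Qed.

Definition eulerz (p : P) : P := \sum_(j < N) 'X_(lshift N j) * p^`M(lshift N j).

Lemma eulerzC (c : C) : eulerz c%:MP = 0.
Proof. by rewrite /eulerz big1 // => j _; rewrite mderivC mulr0. Qed.

Lemma eulerzB (p q : P) : eulerz (p - q) = eulerz p - eulerz q.
Proof. by rewrite /eulerz -sumrB; apply: eq_bigr => j _; rewrite mderivB mulrBr. Qed.

Lemma eulerzM (p q : P) : eulerz (p * q) = eulerz p * q + p * eulerz q.
Proof.
rewrite /eulerz mulr_suml mulr_sumr -big_split /=; apply: eq_bigr => j _.
by rewrite mderivM mulrDr; congr (_ + _); [exact: mulrA | exact: mulrCA].
Qed.

Lemma mderiv_Jpol_z (j : 'I_N) : J^`M(lshift N j) = 'X_(rshift N j).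
Proof.
rewrite JpolE raddf_sum /= (bigD1 j) //= big1 ?addr0 => [|k kj].
  by rewrite mderivX mzzb_lshift eqxx scale1r /mzzb addmC addmK.
by rewrite mderivX mzzb_lshift (negbTE kj) scale0r.
Qed.

Lemma eulerz_Jpol : eulerz J = J.
Proof. by apply: eq_bigr => j _; rewrite mderiv_Jpol_z. Qed.

Lemma eulerz_Jpol_exp (k : nat) : eulerz (J ^+ k) = k%:R *: J ^+ k.
Proof.
elim: k => [|k IHk]; first by rewrite expr0 -mpolyC1 eulerzC scale0r.
by rewrite exprS eulerzM eulerz_Jpol IHk -scalerAr -natr1 scalerDl scale1r addrC.
Qed.

Definition zbar_ffact (j : 'I_N) (K : 'X_{1..N}) : nat :=
  \prod_(i < M) (mzzb j i)^_(liftzb K i).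

Lemma mderivm_Jpol_zbar (K : 'X_{1..N}) :
  J^`M[liftzb K] = \sum_(j < N) (zbar_ffact j K)%:R *: 'X_[mzzb j - liftzb K].
Proof. by rewrite JpolE raddf_sum; apply: eq_bigr => j _; exact: mderivmX. Qed.

Lemma zbar_ffact0 (j : 'I_N) : zbar_ffact j 0%MM = 1%N.
Proof. by rewrite /zbar_ffact liftzb0 big1 // => i _; rewrite mnm0E. Qed.

Lemma zbar_ffactU (j : 'I_N) : zbar_ffact j U_(j)%MM = 1%N.
Proof.
rewrite /zbar_ffact liftzbU big1 // => i _; rewrite mnm1E.
by case: eqP => [<-|_]; rewrite ?mzzb_rshift ?eqxx ?ffactn0.
Qed.

Lemma zbar_ffact_eq0 (j : 'I_N) (K : 'X_{1..N}) :
  K != 0%MM -> K != U_(j)%MM -> zbar_ffact j K = 0%N.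
Proof.
move=> K0 Kj; have [/existsP [k ltK]|] := boolP [exists k, ((j == k) < K k)%N].
  rewrite /zbar_ffact (bigD1 (rshift N k)) //= mzzb_rshift liftzb_rshift.
  by rewrite ffact_small.
rewrite negb_exists => /forallP /(_ _) leK; exfalso.
have leK0 k : j != k -> K k = 0%N.
  by move=> /negbTE jk; have := leK k; rewrite jk; case: (K k).
have [Kj0|Kj1] := eqVneq (K j) 0%N.
  move/negP: K0; apply; apply/eqP/mnmP => k; rewrite mnm0E.
  by case: (eqVneq j k) => [<-|/leK0].
move/negP: Kj; apply; apply/eqP/mnmP => k; rewrite mnm1E.
case: (eqVneq j k) => [<-|/leK0 //]; move: Kj1 (leK j); rewrite eqxx.
by case: (K j) => [|[|]].
Qed.

(* J has degree one in each zbar_j, so only K = 0 and K = U_(j) contribute. *)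
Lemma wick_Jpol (hb : C) (p : P) : wick hb J p = J * p + hb *: eulerz p.
Proof.
rewrite /wick /eulerz [in RHS]JpolE mulr_suml scaler_sumr -big_split /=.
under eq_bigr => K _ do rewrite mderivm_Jpol_zbar mulr_suml scaler_sumr.
rewrite exchange_big /=; apply: eq_bigr => j _.
have deg0 : (mdeg (0%MM : 'X_{1..N}) < (msize J).+1)%N by rewrite mdeg0.
have degU : (mdeg U_(j)%MM < (msize J).+1)%N.
  by rewrite mdeg1 ltnS ltnW // ltnW // msize_Jpol_gt2.
pose K0 : 'X_{1..N < (msize J).+1} := BMultinom deg0.
pose Kj : 'X_{1..N < (msize J).+1} := BMultinom degU.
have KjK0 : Kj != K0.
  by rewrite bmeqP /=; apply/negP => /eqP/mnmP/(_ j); rewrite mnm1E mnm0E eqxx.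
rewrite (bigD1 K0) //= (bigD1 Kj) /=; last by rewrite KjK0.
rewrite big1 ?addr0 => [|K /andP [KKj KK0]]; last first.
  by rewrite zbar_ffact_eq0 ?scale0r ?mul0r ?scaler0.
congr (_ + _).
  rewrite mdeg0 mfact0 expr0 divr1 scale1r zbar_ffact0 scale1r.
  by rewrite liftzb0 liftz0 mderivm0m subm0.
rewrite mdeg1 mfactU expr1 divr1 zbar_ffactU scale1r.
by rewrite liftzbU liftzU mderivmU1m /mzzb addmK.
Qed.

Section StarIdeal.
Variables (hb mu : C) (I : P -> Prop).
Hypotheses (I_star : is_star_ideal hb I) (I_gen : I (J - mu%:MP)) (hb_neq0 : hb != 0).

Lemma star_ideal0 : I 0.
Proof. by case: I_star => _ []. Qed.

Lemma star_idealD (x y : P) : I x -> I y -> I (x + y).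
Proof. by case: I_star => _ [_ [ID _]]; exact: ID. Qed.

Lemma star_idealZ (c : C) (x : P) : I x -> I (c *: x).
Proof. by case: I_star => _ [_ [_ [IZ _]]]; exact: IZ. Qed.

Lemma star_ideal_sum (T : Type) (r : seq T) (F : T -> P) :
  (forall i, I (F i)) -> I (\sum_(i <- r) F i).
Proof.
by move=> IF; elim/big_rec: _ => [|i x _]; [exact: star_ideal0 | apply: star_idealD].
Qed.

Lemma star_ideal_wick_Jpol (x : P) : I x -> I (wick hb J x).
Proof. by case: I_star => _ [_ [_ [_ [IL _]]]]; apply: IL; exact: balanced_Jpol. Qed.

Lemma star_ideal_Jpol_exp (k : nat) : I (J ^+ k - (hb ^+ k * ffall (mu / hb) k)%:MP).
Proof.
elim: k => [|k IHk].
  by rewrite expr0 mul1r /ffall big_ord0 mpolyC1 subrr; exact: star_ideal0.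
set c := hb ^+ k * ffall (mu / hb) k.
have -> : J ^+ k.+1 - (hb ^+ k.+1 * ffall (mu / hb) k.+1)%:MP =
    wick hb J (J ^+ k - c%:MP) + (- (hb * k%:R)) *: (J ^+ k - c%:MP) + c *: (J - mu%:MP).
  rewrite ffall_scaled_recr // wick_Jpol eulerzB eulerzC eulerz_Jpol_exp.
  rewrite -!mul_mpolyC !(rmorphM, rmorphB, rmorphN) exprS.
  ring.
apply: star_idealD; last exact: star_idealZ.
apply: star_idealD; last exact: star_idealZ.
exact: star_ideal_wick_Jpol.
Qed.
End StarIdeal.
End Wick.

Theorem proposition5p7 (C : numClosedFieldType) (n : nat) (hb mu : C)
    (f : {mpoly C[n.+1 + n.+1]}) :
  0 < hb -> mu \is Num.real -> balanced f ->
  star_ideal_gen hb (Jpol C n - mu%:MP) ((Omega hb mu f)%:MP - f_av f).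
Proof.
move=> hb_gt0 _ _ I I_star I_gen.
rewrite /Omega /f_av rmorph_sum -sumrB; apply: (star_ideal_sum I_star) => k.
set c := hb ^+ k * ffall (mu / hb) k.
have -> : (c * tau k f)%:MP - Jpol C n ^+ k * (tau k f)%:MP =
    - tau k f *: (Jpol C n ^+ k - c%:MP).
  by rewrite -!mul_mpolyC !(rmorphM, rmorphN); ring.
by apply: (star_idealZ I_star); apply: star_ideal_Jpol_exp; rewrite ?gt_eqF.
Qed.
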